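(* Let $N\ge2$, $R>0$, let $g:[0,R]\to(0,\infty)$ be smooth, let $A,B,p,q$ be positive constants with $A\neq B$, and let $\kappa\in(0,1)$, all independent of $\epsilon$. For $\epsilon>0$ let $U_\epsilon\in C^1([0,R])\cap C^\infty((0,R))$ be the unique solution of problem (N* ) described in the context, and set $I_p=\int_0^R s^{N-1}e^{pU_\epsilon(s)}ds$, $I_q=\int_0^R s^{N-1}e^{-qU_\epsilon(s)}ds$, $$\Lambda_{1,\epsilon}(R)=\frac{\epsilon^2}{2}\int_0^R\frac{(N-2)g(s)+sg'(s)}{R^N}s^{N-1}U_\epsilon'(s)^2ds,$$ $$\Lambda_{2,\epsilon}(R)=-\frac{\epsilon^2}{2}g(\epsilon^\kappa)U_\epsilon'(\epsilon^\kappa)^2+\frac{\epsilon^2}{2}\int_{\epsilon^\kappa}^R\frac{2(N-1)g(s)+sg'(s)}{s}U_\epsilon'(s)^2ds.$$ Then $$\frac{R^N}{N}\Big(\frac{Ae^{pU_\epsilon(R)}}{pI_p}+\frac{Be^{-qU_\epsilon(R)}}{qI_q}\Big)=\frac{R^2(A-B)^2}{2N^2\epsilon^2g(R)}+\frac Ap+\frac Bq+\Lambda_{1,\epsilon}(R),$$ and $$\frac{R^N}{N}\Big(\frac{Ae^{pU_\epsilon(\epsilon^\kappa)}}{pI_p}+\frac{Be^{-qU_\epsilon(\epsilon^\kappa)}}{qI_q}\Big)=\frac Ap+\frac Bq+\Lambda_{1,\epsilon}(R)-\Lambda_{2,\epsilon}(R).$$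
   Context: Problem (N* ): for $\epsilon>0$, find $U_\epsilon\in C^1([0,R])\cap C^\infty((0,R))$ such that for $r\in(0,R)$ $$\epsilon^2 g(r)\Big[U_\epsilon''(r)+\Big(\frac{N-1}{r}+\frac{g'(r)}{g(r)}\Big)U_\epsilon'(r)\Big]=\frac{R^N}{N}\Big(\frac{Ae^{pU_\epsilon(r)}}{\int_0^R s^{N-1}e^{pU_\epsilon(s)}ds}-\frac{Be^{-qU_\epsilon(r)}}{\int_0^R s^{N-1}e^{-qU_\epsilon(s)}ds}\Big),$$ together with $\int_0^R s^{N-1}U_\epsilon(s)\,ds=0$, $U_\epsilon'(0)=0$ and $U_\epsilon'(R)=\frac{R(A-B)}{\epsilon^2Ng(R)}$; it has a unique solution. Integrals $\int_a^b$ with $a>b$ are understood as $-\int_b^a$. *)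

From Stdlib Require Import Reals Lra.
From Coquelicot Require Import Coquelicot.
Open Scope R_scope.

(* g is smooth on [0,Rr]: it is C^infinity on an open interval containing [0,Rr]
   (equivalent, by Whitney/Seeley extension, to smoothness up to the boundary). *)
Definition smooth_on_closed (g : R -> R) (Rr : R) : Prop :=
  exists delta : R, 0 < delta /\
    forall (n : nat) (x : R), -delta < x < Rr + delta -> ex_derive_n g n x.

Definition C1_closed_with_deriv (U Up : R -> R) (Rr : R) : Prop :=
  (forall x, 0 <= x <= Rr ->
     filterlim (fun y => (U y - U x) / (y - x))
       (within (fun y => 0 <= y <= Rr /\ y <> x) (locally x)) (locally (Up x))) /\
  (forall x, 0 <= x <= Rr ->
     filterlim Up (within (fun y => 0 <= y <= Rr) (locally x)) (locally (Up x))).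

Definition smooth_on_open (U : R -> R) (Rr : R) : Prop :=
  forall (n : nat) (x : R), 0 < x < Rr -> ex_derive_n U n x.

Definition Ip (N : nat) (Rr p : R) (U : R -> R) : R :=
  RInt (fun s => s ^ (N - 1)%nat * exp (p * U s)) 0 Rr.
Definition Iq (N : nat) (Rr q : R) (U : R -> R) : R :=
  RInt (fun s => s ^ (N - 1)%nat * exp (- q * U s)) 0 Rr.

Definition solves_Nstar (N : nat) (Rr : R) (g : R -> R) (A B p q eps : R)
    (U Up : R -> R) : Prop :=
  C1_closed_with_deriv U Up Rr /\
  smooth_on_open U Rr /\
  (forall r, 0 < r < Rr ->
     eps ^ 2 * g r * (Derive_n U 2 r + ((INR N - 1) / r + Derive g r / g r) * Derive U r)
     = Rr ^ N / INR N *
       (A * exp (p * U r) / Ip N Rr p U - B * exp (- q * U r) / Iq N Rr q U)) /\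
  RInt (fun s => s ^ (N - 1)%nat * U s) 0 Rr = 0 /\
  Up 0 = 0 /\
  Up Rr = Rr * (A - B) / (eps ^ 2 * INR N * g Rr).

Definition Lambda1 (N : nat) (Rr : R) (g : R -> R) (eps : R) (Up : R -> R) : R :=
  eps ^ 2 / 2 *
  RInt (fun s => ((INR N - 2) * g s + s * Derive g s) / Rr ^ N * s ^ (N - 1)%nat * Up s ^ 2)
    0 Rr.

(* Lambda_2 with the lower point t = eps^kappa *)
Definition Lambda2 (N : nat) (Rr : R) (g : R -> R) (eps t : R) (Up : R -> R) : R :=
  - (eps ^ 2 / 2) * g t * Up t ^ 2 +
  eps ^ 2 / 2 * RInt (fun s => (2 * (INR N - 1) * g s + s * Derive g s) / s * Up s ^ 2) t Rr.

From Stdlib Require Import Reals Lra Lia.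
From Coquelicot Require Import Coquelicot.
Open Scope R_scope.

(* Write F(y) = R^N/N (A e^(p y) / (p I_p) + B e^(-q y) / (q I_q)); then the equation of
   problem N* reads eps^2 r^(1-N) (r^(N-1) g U')' = F'(U).  Along a solution the energy
   E = F(U) - eps^2/2 g U'^2 satisfies E' = eps^2/2 ((2(N-1) g + r g') / r) U'^2, and
   (r^N E)' = N r^(N-1) F(U) + eps^2/2 ((N-2) g + r g') r^(N-1) U'^2.  Integrating the
   second relation over [0, R] (a Pohozaev identity) gives the first claim, because
   int_0^R s^(N-1) F(U) = R^N/N (A/p + B/q) by the definition of I_p and I_q, and U'(R) is
   prescribed; integrating the first relation over [eps^kappa, R] then gives the second. *)

Lemma continuous_Rplus (f g : R -> R) x :
  continuous f x -> continuous g x -> continuous (fun y => f y + g y) x.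
Proof. exact (@continuous_plus R_UniformSpace R_AbsRing R_NormedModule f g x). Qed.

Lemma continuous_Ropp (f : R -> R) x : continuous f x -> continuous (fun y => - f y) x.
Proof. exact (@continuous_opp R_UniformSpace R_AbsRing R_NormedModule f x). Qed.

Lemma continuous_Rminus (f g : R -> R) x :
  continuous f x -> continuous g x -> continuous (fun y => f y - g y) x.
Proof. intros Hf Hg. apply continuous_Rplus; [exact Hf | apply continuous_Ropp, Hg]. Qed.

Lemma continuous_Rmult (f g : R -> R) x :
  continuous f x -> continuous g x -> continuous (fun y => f y * g y) x.
Proof. exact (@continuous_mult R_UniformSpace R_AbsRing f g x). Qed.

Lemma continuous_Rdiv (f g : R -> R) x :
  continuous f x -> continuous g x -> g x <> 0 -> continuous (fun y => f y / g y) x.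
Proof.
  intros Hf Hg Hgx. apply continuous_Rmult; [exact Hf | apply continuous_Rinv_comp; assumption].
Qed.

Lemma continuous_pow (f : R -> R) n x : continuous f x -> continuous (fun y => f y ^ n) x.
Proof.
  intros Hf. apply (continuous_comp f (fun y => y ^ n)); [exact Hf |].
  apply (@ex_derive_continuous R_AbsRing R_NormedModule). auto_derive. exact I.
Qed.

Ltac solve_continuous :=
  repeat match goal with
  | |- continuous (fun _ => ?c) _ => apply continuous_const
  | |- continuous (fun _ => _ + _) _ => apply continuous_Rplus
  | |- continuous (fun _ => _ - _) _ => apply continuous_Rminus
  | |- continuous (fun _ => _ * _) _ => apply continuous_Rmult
  | |- continuous (fun _ => _ / _) _ => apply continuous_Rdiv
  | |- continuous (fun _ => - _) _ => apply continuous_Ropp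
  | |- continuous (fun _ => _ ^ _) _ => apply continuous_pow
  | |- continuous (fun _ => exp _) _ => apply continuous_exp_comp
  | |- continuous (fun y => y) _ => apply continuous_id
  | H : forall z, continuous ?f z |- continuous ?f _ => exact (H _)
  | H : continuous ?f ?x |- continuous ?f ?x => exact H
  end.

(* [auto_derive] leaves the derivatives of opaque functions in this eta-expanded form. *)
Lemma is_derive_unique_eta (f : R -> R) x l : is_derive f x l -> Derive (fun y => f y) x = l.
Proof. apply is_derive_unique. Qed.

Lemma eq_of_is_derive_0 (f : R -> R) a b : a <= b ->
  (forall x, a <= x <= b -> continuous f x) ->
  (forall x, a < x < b -> is_derive f x 0) -> f b = f a.
Proof.
  intros Hab Hc Hd.
  destruct (MVT_gen f a b (fun _ => 0)) as [c [_ Hfc]].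
  - rewrite Rmin_left, Rmax_right by exact Hab. exact Hd.
  - rewrite Rmin_left, Rmax_right by exact Hab.
    intros x Hx. apply continuity_pt_filterlim, Hc, Hx.
  - lra.
Qed.

Lemma is_derive_RInt_upper (h : R -> R) m a x : m < a -> m < x ->
  (forall y, m < y -> continuous h y) -> is_derive (fun y => RInt h a y) x (h x).
Proof.
  intros Ha Hx Hh. apply (is_derive_RInt h _ a).
  - apply (filter_imp (fun y => m < y)); [| exact (open_gt m x Hx)].
    intros y Hy.
    apply (@RInt_correct R_CompleteNormedModule), (@ex_RInt_continuous R_CompleteNormedModule).
    intros z Hz. apply Hh.
    apply Rlt_le_trans with (Rmin a y); [apply Rmin_glb_lt |]; tauto.
  - apply Hh, Hx.
Qed.

Lemma continuous_RInt_upper (h : R -> R) m a x : m < a -> m < x ->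
  (forall y, m < y -> continuous h y) -> continuous (fun y => RInt h a y) x.
Proof.
  intros Ha Hx Hh. apply (@ex_derive_continuous R_AbsRing R_NormedModule).
  eexists. exact (is_derive_RInt_upper h m a x Ha Hx Hh).
Qed.

Lemma RInt_ext_interval (f g : R -> R) x y : x <= y ->
  (forall s, x < s < y -> f s = g s) -> RInt f x y = RInt g x y.
Proof. intros Hxy H. apply RInt_ext. rewrite Rmin_left, Rmax_right by exact Hxy. exact H. Qed.

Lemma ex_RInt_of_continuous (h : R -> R) a b : (forall x, continuous h x) -> ex_RInt h a b.
Proof. intros H. apply (@ex_RInt_continuous R_CompleteNormedModule). intros; apply H. Qed.

Lemma locally_interval a b x : a < x < b -> locally x (fun y => a < y < b).
Proof. exact (open_and _ _ (open_gt a) (open_lt b) x). Qed.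

(* Composing with [clamp a b] turns a function continuous on [a, b] into a function
   continuous on all of R, to which Coquelicot's integration lemmas apply. *)
Definition clamp (a b x : R) : R := Rmax a (Rmin b x).

Lemma clamp_in a b x : a <= b -> a <= clamp a b x <= b.
Proof. intros. unfold clamp, Rmax, Rmin. repeat destruct Rle_dec; lra. Qed.

Lemma clamp_id a b x : a <= x <= b -> clamp a b x = x.
Proof. intros. unfold clamp, Rmax, Rmin. repeat destruct Rle_dec; lra. Qed.

Lemma Rabs_clamp_sub_le a b x y : a <= b ->
  Rabs (clamp a b y - clamp a b x) <= Rabs (y - x).
Proof.
  intros. unfold clamp, Rmax, Rmin.
  repeat destruct Rle_dec; unfold Rabs; repeat destruct Rcase_abs; lra.
Qed.

Lemma continuous_clamp (f : R -> R) a b : a <= b ->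
  continuous_on (fun y => a <= y <= b) f ->
  forall x, continuous (fun y => f (clamp a b y)) x.
Proof.
  intros Hab Hf x P HP.
  destruct (Hf (clamp a b x) (clamp_in a b x Hab) P HP) as [d Hd].
  exists d. intros y Hy.
  apply Hd; [| apply clamp_in, Hab].
  exact (Rle_lt_trans _ _ _ (Rabs_clamp_sub_le a b x y Hab) Hy).
Qed.

Lemma is_derive_clamp (f : R -> R) a b x l : a < x < b ->
  is_derive f x l -> is_derive (fun y => f (clamp a b y)) x l.
Proof.
  intros Hx Hf. apply (is_derive_ext_loc f); [| exact Hf].
  apply (filter_imp (fun y => a < y < b)).
  - intros y Hy. rewrite clamp_id by lra. reflexivity.
  - exact (locally_interval a b x Hx).
Qed.

Lemma continuous_within_of_difference_quotient (f : R -> R) (D : R -> Prop) x l :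
  filterlim (fun y => (f y - f x) / (y - x))
    (within (fun y => D y /\ y <> x) (locally x)) (locally l) ->
  filterlim f (within D (locally x)) (locally (f x)).
Proof.
  set (F := within (fun y => D y /\ y <> x) (locally x)).
  intros Hq.
  assert (Hx : filterlim (fun y => y - x) F (locally 0)).
  { apply (filterlim_filter_le_1 (F := locally x)).
    - intros P HP. unfold F, within. apply (filter_imp P); [intros y Hy _; exact Hy | exact HP].
    - replace 0 with (x - x) by ring.
      apply (continuous_Rminus (fun y => y)); [apply continuous_id | apply continuous_const]. }
  assert (Hrem : filterlim (fun y => (f y - f x) / (y - x) * (y - x)) F (locally 0)).
  { rewrite <- (Rmult_0_r l).
    exact (filterlim_comp_2 _ _ Rmult Hq Hx (@filterlim_mult R_AbsRing l 0)). }
  assert (Hf : filterlim f F (locally (f x))).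
  { apply (filterlim_ext_loc (fun y => f x + (f y - f x) / (y - x) * (y - x))).
    - unfold F, within. apply filter_forall. intros y [_ Hy]. field. lra.
    - rewrite <- (Rplus_0_r (f x)) at 1.
      exact (filterlim_comp_2 _ _ Rplus (filterlim_const (f x)) Hrem
               (@filterlim_plus R_AbsRing R_NormedModule (f x) 0)). }
  intros P HP. unfold filtermap, within.
  apply (filter_imp (fun y => D y /\ y <> x -> P (f y)));
    [| exact (Hf P HP)].
  intros y Hy HDy. destruct (Req_dec y x) as [-> | Hyx].
  - exact (locally_singleton _ _ HP).
  - exact (Hy (conj HDy Hyx)).
Qed.

Lemma is_derive_of_difference_quotient (f : R -> R) (D : R -> Prop) x l :
  locally x D ->
  filterlim (fun y => (f y - f x) / (y - x))
    (within (fun y => D y /\ y <> x) (locally x)) (locally l) ->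
  is_derive f x l.
Proof.
  intros [d HD] Hq. apply is_derive_Reals. intros e He.
  destruct (proj1 (filterlim_locally _ _) Hq (mkposreal e He)) as [d' Hd'].
  exists (mkposreal _ (Rmin_pos d d' (cond_pos d) (cond_pos d'))).
  intros h Hh0 Hh. simpl in Hh.
  assert (Hball : forall r : posreal, Rmin d d' <= r -> ball x r (x + h)).
  { intros r Hr. change (Rabs (x + h - x) < r).
    replace (x + h - x) with h by ring. lra. }
  assert (Hq' := Hd' (x + h) (Hball d' (Rmin_r d d'))).
  change (D (x + h) /\ x + h <> x -> Rabs ((f (x + h) - f x) / (x + h - x) - l) < e) in Hq'.
  replace (x + h - x) with h in Hq' by ring.
  apply Hq'. split; [apply HD, Hball, Rmin_l | lra].
Qed.

Lemma C1_closed_continuous_on (U Up : R -> R) Rr :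
  C1_closed_with_deriv U Up Rr -> continuous_on (fun y => 0 <= y <= Rr) U.
Proof.
  intros [Hq _] x Hx. exact (continuous_within_of_difference_quotient U _ x (Up x) (Hq x Hx)).
Qed.

Lemma C1_closed_is_derive (U Up : R -> R) Rr x :
  C1_closed_with_deriv U Up Rr -> 0 < x < Rr -> is_derive U x (Up x).
Proof.
  intros [Hq _] Hx. apply (is_derive_of_difference_quotient U (fun y => 0 <= y <= Rr)).
  - apply (filter_imp _ _ (fun y Hy => conj (Rlt_le _ _ (proj1 Hy)) (Rlt_le _ _ (proj2 Hy)))).
    exact (locally_interval 0 Rr x Hx).
  - apply Hq. lra.
Qed.

Lemma smooth_on_closed_C1 (g : R -> R) Rr : smooth_on_closed g Rr ->
  (forall x, 0 <= x <= Rr -> ex_derive g x) /\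
  (forall x, 0 <= x <= Rr -> continuous (Derive g) x).
Proof.
  intros [d [Hd Hg]]. split; intros x Hx.
  - exact (Hg 1%nat x ltac:(lra)).
  - apply (@ex_derive_continuous R_AbsRing R_NormedModule). exact (Hg 2%nat x ltac:(lra)).
Qed.

Lemma Ip_pos N Rr a (U : R -> R) : 0 < Rr ->
  continuous_on (fun y => 0 <= y <= Rr) U -> 0 < Ip N Rr a U.
Proof.
  intros HR HU. unfold Ip.
  rewrite (RInt_ext_interval _ (fun s => s ^ (N - 1) * exp (a * U (clamp 0 Rr s)))) by
    (lra || (intros s Hs; rewrite clamp_id by lra; reflexivity)).
  pose proof (continuous_clamp U 0 Rr (Rlt_le _ _ HR) HU).
  apply RInt_gt_0; [exact HR | | intros x _; solve_continuous].
  intros x Hx. apply Rmult_lt_0_compat; [apply pow_lt; lra | apply exp_pos].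
Qed.

Section Radial_identities.

Variables (N : nat) (Rr k : R) (F f g dg u du ddu : R -> R).

Hypothesis N_pos : (1 <= N)%nat.
Hypothesis Rr_nonneg : 0 <= Rr.
Hypothesis F_derive : forall y, is_derive F y (f y).
Hypothesis g_cont : forall x, continuous g x.
Hypothesis dg_cont : forall x, continuous dg x.
Hypothesis u_cont : forall x, continuous u x.
Hypothesis du_cont : forall x, continuous du x.
Hypothesis g_derive : forall x, 0 < x < Rr -> is_derive g x (dg x).
Hypothesis u_derive : forall x, 0 < x < Rr -> is_derive u x (du x).
Hypothesis du_derive : forall x, 0 < x < Rr -> is_derive du x (ddu x).
Hypothesis radial_ode : forall x, 0 < x < Rr ->
  k * (g x * ddu x + ((INR N - 1) / x * g x + dg x) * du x) = f (u x).

Definition radial_energy (x : R) : R := F (u x) - k / 2 * g x * du x ^ 2.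

Lemma continuous_F_u x : continuous (fun y => F (u y)) x.
Proof.
  apply (continuous_comp u F); [apply u_cont |].
  apply (@ex_derive_continuous R_AbsRing R_NormedModule). eexists. apply F_derive.
Qed.

Lemma continuous_radial_energy x : continuous radial_energy x.
Proof. pose proof continuous_F_u. unfold radial_energy. solve_continuous. Qed.

Lemma is_derive_radial_energy x : 0 < x < Rr ->
  is_derive radial_energy x (k / 2 * ((2 * (INR N - 1) * g x + x * dg x) / x * du x ^ 2)).
Proof.
  intros Hx. unfold radial_energy. auto_derive.
  - repeat split; eexists; eauto.
  - rewrite (is_derive_unique_eta _ _ _ (F_derive (u x))),
      (is_derive_unique_eta _ _ _ (u_derive x Hx)), (is_derive_unique_eta _ _ _ (g_derive x Hx)),
      (is_derive_unique_eta _ _ _ (du_derive x Hx)).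
    rewrite <- (radial_ode x Hx). field. lra.
Qed.

Lemma pohozaev_identity :
  Rr ^ N * radial_energy Rr
  = k / 2 * RInt (fun s => ((INR N - 2) * g s + s * dg s) * s ^ (N - 1) * du s ^ 2) 0 Rr
    + INR N * RInt (fun s => s ^ (N - 1) * F (u s)) 0 Rr.
Proof.
  pose proof continuous_F_u as Fu_cont.
  pose proof continuous_radial_energy as E_cont.
  set (h1 := fun s => ((INR N - 2) * g s + s * dg s) * s ^ (N - 1) * du s ^ 2).
  set (h2 := fun s => s ^ (N - 1) * F (u s)).
  assert (h1_cont : forall x, continuous h1 x) by (intro; unfold h1; solve_continuous).
  assert (h2_cont : forall x, continuous h2 x) by (intro; unfold h2; solve_continuous).
  pose (I1 y := RInt h1 0 y). pose (I2 y := RInt h2 0 y).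
  pose (Phi x := x ^ N * radial_energy x - k / 2 * I1 x - INR N * I2 x).
  assert (Phi_const : Phi Rr = Phi 0).
  { apply eq_of_is_derive_0; [exact Rr_nonneg | |].
    - intros x Hx.
      assert (I1_cont : continuous I1 x)
        by (apply (continuous_RInt_upper h1 (-1)); [lra | lra | auto]).
      assert (I2_cont : continuous I2 x)
        by (apply (continuous_RInt_upper h2 (-1)); [lra | lra | auto]).
      unfold Phi. solve_continuous.
    - intros x Hx.
      assert (E' := is_derive_radial_energy x Hx).
      assert (I1' : is_derive I1 x (h1 x))
        by (apply (is_derive_RInt_upper h1 (-1)); [lra | lra | auto]).
      assert (I2' : is_derive I2 x (h2 x))
        by (apply (is_derive_RInt_upper h2 (-1)); [lra | lra | auto]).
      unfold Phi. auto_derive.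
      + repeat split; eexists; eassumption.
      + rewrite (is_derive_unique_eta _ _ _ E'), (is_derive_unique_eta _ _ _ I1'),
          (is_derive_unique_eta _ _ _ I2').
        unfold h1, h2, radial_energy.
        destruct N as [| n]; [lia |].
        replace (Init.Nat.pred (S n)) with n by reflexivity.
        replace (S n - 1)%nat with n by lia.
        change (x ^ S n) with (x * x ^ n).
        field. lra. }
  unfold Phi, I1, I2 in Phi_const. rewrite !RInt_point, pow_i in Phi_const by lia.
  change (@zero R_CompleteNormedModule) with 0 in Phi_const. lra.
Qed.

Lemma energy_identity t : 0 < t <= Rr ->
  radial_energy Rr
  = radial_energy t
    + k / 2 * RInt (fun s => (2 * (INR N - 1) * g s + s * dg s) / s * du s ^ 2) t Rr.
Proof.
  intros Ht.
  set (h3 := fun s => (2 * (INR N - 1) * g s + s * dg s) / s * du s ^ 2).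
  assert (h3_cont : forall x, 0 < x -> continuous h3 x)
    by (intros x Hx; unfold h3; solve_continuous; lra).
  pose (I3 y := RInt h3 t y).
  pose (Psi x := radial_energy x - k / 2 * I3 x).
  assert (Psi_const : Psi Rr = Psi t).
  { apply eq_of_is_derive_0; [lra | |].
    - intros x Hx.
      assert (I3_cont : continuous I3 x)
        by (apply (continuous_RInt_upper h3 0); [lra | lra | auto]).
      pose proof continuous_radial_energy. unfold Psi. solve_continuous.
    - intros x Hx.
      assert (E' := is_derive_radial_energy x ltac:(lra)).
      assert (I3' : is_derive I3 x (h3 x))
        by (apply (is_derive_RInt_upper h3 0); [lra | lra | auto]).
      unfold Psi. auto_derive.
      + repeat split; eexists; eassumption.
      + rewrite (is_derive_unique_eta _ _ _ E'), (is_derive_unique_eta _ _ _ I3').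
        unfold h3. ring. }
  unfold Psi, I3 in Psi_const. rewrite RInt_point in Psi_const.
  change (@zero R_CompleteNormedModule) with 0 in Psi_const. lra.
Qed.

End Radial_identities.

Section Nstar.

Variables (N : nat) (Rr : R) (g : R -> R) (A B p q eps : R) (U Up : R -> R).

Hypothesis N_pos : (1 <= N)%nat.
Hypothesis Rr_pos : 0 < Rr.
Hypothesis g_derive : forall x, 0 <= x <= Rr -> ex_derive g x.
Hypothesis dg_cont : forall x, 0 <= x <= Rr -> continuous (Derive g) x.
Hypothesis g_pos : forall x, 0 <= x <= Rr -> 0 < g x.
Hypothesis p_neq0 : p <> 0.
Hypothesis q_neq0 : q <> 0.
Hypothesis eps_neq0 : eps <> 0.
Hypothesis U_solves : solves_Nstar N Rr g A B p q eps U Up.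

Local Notation c := (clamp 0 Rr).

Definition nstar_potential (y : R) : R :=
  Rr ^ N / INR N
  * (A * exp (p * y) / (p * Ip N Rr p U) + B * exp (- q * y) / (q * Iq N Rr q U)).

Definition nstar_force (y : R) : R :=
  Rr ^ N / INR N * (A * exp (p * y) / Ip N Rr p U - B * exp (- q * y) / Iq N Rr q U).

Lemma U_C1_closed : C1_closed_with_deriv U Up Rr.
Proof. exact (proj1 U_solves). Qed.

Lemma Ip_Iq_pos : 0 < Ip N Rr p U /\ 0 < Iq N Rr q U.
Proof.
  split; [| change (Iq N Rr q U) with (Ip N Rr (- q) U)];
    apply Ip_pos; [exact Rr_pos | | exact Rr_pos |];
    apply (C1_closed_continuous_on U Up), U_C1_closed.
Qed.

Lemma nstar_potential_derive y : is_derive nstar_potential y (nstar_force y).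
Proof.
  destruct Ip_Iq_pos. assert (0 < INR N) by (apply lt_0_INR; lia).
  unfold nstar_potential, nstar_force. auto_derive; [exact I |]. field. repeat split; lra.
Qed.

Lemma continuous_U_clamp x : continuous (fun s => U (c s)) x.
Proof. apply continuous_clamp; [lra | apply (C1_closed_continuous_on U Up), U_C1_closed]. Qed.

Lemma continuous_Up_clamp x : continuous (fun s => Up (c s)) x.
Proof. apply continuous_clamp; [lra | exact (proj2 U_C1_closed)]. Qed.

Lemma continuous_g_clamp x : continuous (fun s => g (c s)) x.
Proof.
  apply continuous_clamp; [lra |]. apply continuous_on_forall. intros y Hy.
  apply (@ex_derive_continuous R_AbsRing R_NormedModule), g_derive, Hy.
Qed.

Lemma continuous_dg_clamp x : continuous (fun s => Derive g (c s)) x.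
Proof. apply continuous_clamp; [lra | apply continuous_on_forall, dg_cont]. Qed.

Lemma is_derive_U_clamp x : 0 < x < Rr -> is_derive (fun s => U (c s)) x (Up (c x)).
Proof.
  intros Hx. rewrite clamp_id by lra.
  apply is_derive_clamp, (C1_closed_is_derive U Up Rr x U_C1_closed); exact Hx.
Qed.

Lemma is_derive_Up_clamp x : 0 < x < Rr -> is_derive (fun s => Up (c s)) x (Derive_n U 2 x).
Proof.
  intros Hx. apply is_derive_clamp; [exact Hx |].
  apply (is_derive_ext_loc (Derive U)).
  - apply (filter_imp (fun y => 0 < y < Rr)); [| exact (locally_interval 0 Rr x Hx)].
    intros y Hy. exact (is_derive_unique _ _ _ (C1_closed_is_derive U Up Rr y U_C1_closed Hy)).
  - apply Derive_correct. destruct U_solves as [_ [U_smooth _]]. exact (U_smooth 2%nat x Hx).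
Qed.

Lemma is_derive_g_clamp x : 0 < x < Rr -> is_derive (fun s => g (c s)) x (Derive g (c x)).
Proof.
  intros Hx. rewrite clamp_id by lra.
  apply is_derive_clamp; [exact Hx |]. apply Derive_correct, g_derive. lra.
Qed.

Lemma nstar_ode_clamp x : 0 < x < Rr ->
  eps ^ 2 * (g (c x) * Derive_n U 2 x + ((INR N - 1) / x * g (c x) + Derive g (c x)) * Up (c x))
  = nstar_force (U (c x)).
Proof.
  intros Hx. rewrite clamp_id by lra.
  destruct U_solves as [_ [_ [ode _]]].
  assert (g_x := g_pos x ltac:(lra)).
  rewrite <- (is_derive_unique _ _ _ (C1_closed_is_derive U Up Rr x U_C1_closed Hx)).
  unfold nstar_force. rewrite <- (ode x Hx). field. lra.
Qed.

Lemma integral_nstar_potential :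
  RInt (fun s => s ^ (N - 1) * nstar_potential (U (c s))) 0 Rr = Rr ^ N / INR N * (A / p + B / q).
Proof.
  destruct Ip_Iq_pos as [Ip_pos' Iq_pos']. assert (0 < INR N) by (apply lt_0_INR; lia).
  pose proof continuous_U_clamp.
  set (fp := fun s => s ^ (N - 1) * exp (p * U (c s))).
  set (fq := fun s => s ^ (N - 1) * exp (- q * U (c s))).
  assert (fp_int : RInt fp 0 Rr = Ip N Rr p U).
  { apply RInt_ext_interval; [lra |]. intros s Hs.
    unfold fp. rewrite clamp_id by lra. reflexivity. }
  assert (fq_int : RInt fq 0 Rr = Iq N Rr q U).
  { apply RInt_ext_interval; [lra |]. intros s Hs.
    unfold fq. rewrite clamp_id by lra. reflexivity. }
  assert (fp_ex : ex_RInt fp 0 Rr)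
    by (apply ex_RInt_of_continuous; intro; unfold fp; solve_continuous).
  assert (fq_ex : ex_RInt fq 0 Rr)
    by (apply ex_RInt_of_continuous; intro; unfold fq; solve_continuous).
  set (a1 := Rr ^ N / INR N * A / (p * Ip N Rr p U)).
  set (b1 := Rr ^ N / INR N * B / (q * Iq N Rr q U)).
  assert (Hint : is_RInt (fun s => s ^ (N - 1) * nstar_potential (U (c s))) 0 Rr
                (plus (scal a1 (Ip N Rr p U)) (scal b1 (Iq N Rr q U)))).
  { apply (is_RInt_ext (fun s => plus (scal a1 (fp s)) (scal b1 (fq s)))).
    - intros s _. unfold plus, scal, fp, fq, nstar_potential, a1, b1. simpl. unfold mult. simpl.
      field. repeat split; lra.
    - rewrite <- fp_int, <- fq_int.
      apply (@is_RInt_plus R_NormedModule); apply (@is_RInt_scal R_NormedModule);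
        apply (@RInt_correct R_CompleteNormedModule); assumption. }
  rewrite (is_RInt_unique _ _ _ _ Hint). unfold plus, scal, a1, b1. simpl. unfold mult. simpl.
  field. repeat split; lra.
Qed.

Lemma nstar_pohozaev :
  nstar_potential (U Rr) - eps ^ 2 / 2 * g Rr * Up Rr ^ 2 = A / p + B / q + Lambda1 N Rr g eps Up.
Proof.
  assert (HP := pohozaev_identity N Rr (eps ^ 2) nstar_potential nstar_force
    (fun s => g (c s)) (fun s => Derive g (c s)) (fun s => U (c s)) (fun s => Up (c s))
    (Derive_n U 2)
    N_pos (Rlt_le _ _ Rr_pos) nstar_potential_derive continuous_g_clamp continuous_dg_clamp
    continuous_U_clamp continuous_Up_clamp is_derive_g_clamp is_derive_U_clamp is_derive_Up_clamp
    nstar_ode_clamp).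
  cbv beta in HP. unfold radial_energy in HP.
  rewrite integral_nstar_potential, clamp_id in HP by lra.
  set (h1 := fun s =>
    ((INR N - 2) * g (c s) + s * Derive g (c s)) * s ^ (N - 1) * Up (c s) ^ 2) in HP.
  assert (h1_ex : ex_RInt h1 0 Rr).
  { apply ex_RInt_of_continuous. intro.
    pose proof continuous_g_clamp. pose proof continuous_dg_clamp. pose proof continuous_Up_clamp.
    unfold h1. solve_continuous. }
  assert (L1 : Lambda1 N Rr g eps Up = eps ^ 2 / 2 * (/ Rr ^ N * RInt h1 0 Rr)).
  { unfold Lambda1. f_equal. rewrite <- (@RInt_scal R_CompleteNormedModule) by exact h1_ex.
    apply RInt_ext_interval; [lra |]. intros s Hs. unfold h1, scal. simpl. unfold mult. simpl.
    rewrite clamp_id by lra. field. apply pow_nonzero. lra. }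
  assert (0 < INR N) by (apply lt_0_INR; lia).
  assert (Rr ^ N <> 0) by (apply pow_nonzero; lra).
  rewrite L1. apply (Rmult_eq_reg_l (Rr ^ N)); [| assumption].
  rewrite HP. field. split; assumption || lra.
Qed.

Lemma nstar_energy t : 0 < t <= Rr ->
  nstar_potential (U t) = A / p + B / q + Lambda1 N Rr g eps Up - Lambda2 N Rr g eps t Up.
Proof.
  intros Ht.
  assert (HE := energy_identity N Rr (eps ^ 2) nstar_potential nstar_force
    (fun s => g (c s)) (fun s => Derive g (c s)) (fun s => U (c s)) (fun s => Up (c s))
    (Derive_n U 2)
    nstar_potential_derive continuous_g_clamp continuous_dg_clamp continuous_U_clamp
    continuous_Up_clamp is_derive_g_clamp is_derive_U_clamp is_derive_Up_clamp
    nstar_ode_clamp t Ht).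
  cbv beta in HE. unfold radial_energy in HE. rewrite !clamp_id in HE by lra.
  rewrite (RInt_ext_interval _
    (fun s => (2 * (INR N - 1) * g s + s * Derive g s) / s * Up s ^ 2)) in HE
    by (lra || (intros s Hs; rewrite clamp_id by lra; reflexivity)).
  pose proof nstar_pohozaev. unfold Lambda2. lra.
Qed.

Lemma nstar_pohozaev_boundary :
  nstar_potential (U Rr)
  = Rr ^ 2 * (A - B) ^ 2 / (2 * INR N ^ 2 * eps ^ 2 * g Rr) + A / p + B / q
    + Lambda1 N Rr g eps Up.
Proof.
  destruct U_solves as [_ [_ [_ [_ [_ Up_Rr]]]]].
  assert (0 < g Rr) by (apply g_pos; lra).
  assert (0 < INR N) by (apply lt_0_INR; lia).
  assert (eps ^ 2 / 2 * g Rr * Up Rr ^ 2 = Rr ^ 2 * (A - B) ^ 2 / (2 * INR N ^ 2 * eps ^ 2 * g Rr))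
    by (rewrite Up_Rr; field; lra).
  pose proof nstar_pohozaev. lra.
Qed.

End Nstar.

Theorem lemma3p6 (N : nat) (Rr : R) (g : R -> R) (A B p q kappa eps : R)
  (U Up : R -> R) :
  (2 <= N)%nat -> 0 < Rr ->
  smooth_on_closed g Rr -> (forall x, 0 <= x <= Rr -> 0 < g x) ->
  0 < A -> 0 < B -> 0 < p -> 0 < q -> A <> B ->
  0 < kappa < 1 -> 0 < eps ->
  Rpower eps kappa <= Rr ->
  solves_Nstar N Rr g A B p q eps U Up ->
  Rr ^ N / INR N *
    (A * exp (p * U Rr) / (p * Ip N Rr p U) + B * exp (- q * U Rr) / (q * Iq N Rr q U))
  = Rr ^ 2 * (A - B) ^ 2 / (2 * INR N ^ 2 * eps ^ 2 * g Rr) + A / p + B / q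
    + Lambda1 N Rr g eps Up
  /\
  Rr ^ N / INR N *
    (A * exp (p * U (Rpower eps kappa)) / (p * Ip N Rr p U)
     + B * exp (- q * U (Rpower eps kappa)) / (q * Iq N Rr q U))
  = A / p + B / q + Lambda1 N Rr g eps Up - Lambda2 N Rr g eps (Rpower eps kappa) Up.
Proof.
  intros HN HR Hg g_pos _ _ Hp Hq _ _ Heps Ht Hsol.
  destruct (smooth_on_closed_C1 g Rr Hg) as [g_derive dg_cont].
  assert (N_pos : (1 <= N)%nat) by lia.
  assert (t_in : 0 < Rpower eps kappa <= Rr) by (split; [apply exp_pos | exact Ht]).
  split.
  - apply nstar_pohozaev_boundary; assumption || lra.
  - apply nstar_energy; assumption || lra.
Qed.
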